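(* For every $d\ge 4$, every $\beta\in(0,\infty)$ and every choice of pairwise distinct energies $E_0=0,E_1,\dots,E_{d-1}$, the convex set $TP(d)$ has an extreme point that is not biplanar.
   Context: Put $q_{m,n}=e^{-\beta(E_m-E_n)}$, $Z=\sum_j q_{j,0}$, $g_i=q_{i,0}/Z$. $TP(d)$ is the set of $d\times d$ real matrices $T$ with non-negative entries, each column summing to $1$, and $Tg=g$. For $T\in TP(d)$, $G(T)$ is the bipartite graph with left vertices $L_0,\dots,L_{d-1}$ (columns), right vertices $R_0,\dots,R_{d-1}$ (rows), and an edge $\{L_j,R_i\}$ iff $T_{ij}>0$. Given orderings $\lambda,\mu$ (permutations of $\{0,\dots,d-1\}$), place $L_{\lambda_a}$ at height $a$ on one vertical line and $R_{\mu_b}$ at height $b$ on a parallel line, edges drawn straight; the drawing is plain if there are no two edges $\{L_{\lambda_a},R_{\mu_b}\}$, $\{L_{\lambda_{a'}},R_{\mu_{b'}}\}$ with $a<a'$ and $b>b'$. An extreme point $T$ of $TP(d)$ is biplanar if some pair $(\lambda,\mu)$ gives a plain drawing of $G(T)$. *)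

From HB Require Import structures.
From mathcomp Require Import all_boot all_order all_algebra all_fingroup.
From mathcomp Require Import reals sequences exp.
Set Implicit Arguments. Unset Strict Implicit. Unset Printing Implicit Defensive.
Import Order.TTheory GRing.Theory Num.Theory.
Local Open Scope ring_scope.

Definition qf (R : realType) (d : nat) (beta : R) (E : 'I_d -> R) (m n : 'I_d) : R :=
  expR (- (beta * (E m - E n))).

(* Z = sum_j q_{j,0}; 0 is any index with value 0 (d > 0 assumed where used) *)
Definition Zpart (R : realType) (d : nat) (beta : R) (E : 'I_d -> R) (i0 : 'I_d) : R :=
  \sum_(j < d) qf beta E j i0.

Definition gibbs (R : realType) (d : nat) (beta : R) (E : 'I_d -> R) (i0 : 'I_d) : 'cV[R]_d :=
  \col_(i < d) (qf beta E i i0 / Zpart beta E i0).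

Definition TP (R : realType) (d : nat) (beta : R) (E : 'I_d -> R) (i0 : 'I_d)
    (T : 'M[R]_d) : Prop :=
  (forall i j, 0 <= T i j) /\
  (forall j, \sum_(i < d) T i j = 1) /\
  T *m gibbs beta E i0 = gibbs beta E i0.

Definition extreme_point (R : realType) (d : nat) (S : 'M[R]_d -> Prop) (T : 'M[R]_d) : Prop :=
  S T /\
  forall (A B : 'M[R]_d) (t : R), S A -> S B -> 0 < t -> t < 1 ->
    T = t *: A + (1 - t) *: B -> A = B.

(* edge {L_j, R_i} of G(T) iff T_{ij} > 0 *)
Definition edge (R : realType) (d : nat) (T : 'M[R]_d) (j i : 'I_d) : bool := 0 < T i j.

(* lam a = column index placed at height a, mu b = row index placed at height b *)
Definition plain_drawing (R : realType) (d : nat) (T : 'M[R]_d) (lam mu : 'S_d) : Prop :=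
  ~ exists a a' b b' : 'I_d,
      [/\ (a < a')%N, (b' < b)%N, edge T (lam a) (mu b) & edge T (lam a') (mu b')].

Definition biplanar (R : realType) (d : nat) (beta : R) (E : 'I_d -> R) (i0 : 'I_d)
    (T : 'M[R]_d) : Prop :=
  extreme_point (TP beta E i0) T /\ exists lam mu : 'S_d, plain_drawing T lam mu.

From HB Require Import structures.
From mathcomp Require Import all_boot all_order all_algebra all_fingroup.
From mathcomp Require Import reals sequences exp.
Import Order.TTheory GRing.Theory Num.Theory.
Local Open Scope ring_scope.
Set Implicit Arguments. Unset Strict Implicit. Unset Printing Implicit Defensive.

(* Pick states w, x, y, z with g_w < g_x < g_y < g_z for the Gibbs vector g, and let s be the
   permutation x -> w, y -> x, z -> y, w -> z.  Take the permutation matrix of s (row i has its 1 in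
   column s i) and replace its column z by the unique column making T g = g: its nonzero entries
   g_w/g_z, (g_x - g_w)/g_z, (g_y - g_x)/g_z, (g_z - g_y)/g_z lie in rows w, x, y, z.  Off column z
   the support forces the entries (column sums are 1), and then T g = g forces column z, so T is the
   only point of TP(d) supported inside its own support: it is extreme.  Its graph contains the
   spider with centre L_z, middle vertices R_x, R_y, R_z and leaves L_w, L_x, L_y.  In a plain
   drawing a leaf below (above) the centre forces its middle vertex to be the lowest (highest) of
   the three; two of the three leaves lie on the same side of the centre, a contradiction. *)

Lemma sum_delta_mul (R : nzSemiRingType) (I : finType) (a : I) (F : I -> R) :
  \sum_i (i == a)%:R * F i = F a.
Proof. by rewrite (bigD1 a) //= eqxx mul1r big1 ?addr0 // => i /negbTE ->; rewrite mul0r. Qed.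

Section PermFixMx.
Variables (R : fieldType) (d : nat) (g : 'cV[R]_d) (s : 'S_d) (z : 'I_d).

Definition perm_fixmx : 'M[R]_d :=
  \matrix_(i, j) ((s i == j)%:R + (j == z)%:R * ((g i 0 - g (s i) 0) / g z 0)).

Lemma perm_fixmx_leaf i : s i != z -> perm_fixmx i (s i) = 1.
Proof. by move=> /negbTE siz; rewrite mxE eqxx siz mul0r addr0. Qed.

Lemma perm_fixmx_off_col i j : j != z -> perm_fixmx i j = (s i == j)%:R.
Proof. by move=> /negbTE jz; rewrite mxE jz mul0r addr0. Qed.

Hypothesis gz_neq0 : g z 0 != 0.

Lemma perm_fixmx_sum_col j : \sum_i perm_fixmx i j = 1.
Proof.
under eq_bigr do rewrite mxE.
rewrite big_split /= -mulr_sumr -mulr_suml sumrB.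
have sum_s (F : 'I_d -> R) : \sum_i F (s i) = \sum_i F i.
  by rewrite (reindex_perm (s^-1)%g); under eq_bigr do rewrite permKV.
rewrite (sum_s (fun k => g k 0)) subrr mul0r mulr0 addr0.
by rewrite (sum_s (fun k => (k == j)%:R)) (bigD1 j) //= eqxx big1 ?addr0 // => k /negbTE ->.
Qed.

Lemma perm_fixmx_fix : perm_fixmx *m g = g.
Proof.
apply/matrixP => i j; rewrite (ord1 j) !mxE.
under eq_bigr do rewrite mxE mulrDl -mulrA eq_sym.
by rewrite big_split /= !sum_delta_mul divfK // addrC subrK.
Qed.

Lemma perm_fixmx_unique (A : 'M[R]_d) :
  (forall j, \sum_i A i j = 1) -> A *m g = g ->
  (forall i j, perm_fixmx i j = 0 -> A i j = 0) -> A = perm_fixmx.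
Proof.
move=> sumA Ag suppA.
have off_col i j : j != z -> A i j = perm_fixmx i j.
  move=> jz; rewrite perm_fixmx_off_col //.
  have A0 i' : s i' != j -> A i' j = 0.
    by move=> /negbTE sij; apply: suppA; rewrite perm_fixmx_off_col // sij.
  have [sij|/A0 -> //] := eqVneq (s i) j; rewrite -{j jz}sij in A0 *.
  rewrite -(sumA (s i)) (bigD1 i) //= big1 ?addr0 // => i' i'i.
  by apply: A0; rewrite (inj_eq perm_inj).
apply/matrixP => i j; have [->|/off_col //] := eqVneq j z.
have row_i := congr1 (fun M : 'cV_d => M i 0) (etrans Ag (esym perm_fixmx_fix)).
rewrite !mxE (bigD1 z) //= [RHS](bigD1 z) //= in row_i.
have off_sum : \sum_(k | k != z) A i k * g k 0 = \sum_(k | k != z) perm_fixmx i k * g k 0.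
  by apply: eq_bigr => k kz; rewrite off_col.
by rewrite off_sum in row_i; apply: (mulIf gz_neq0); apply: addIr row_i.
Qed.

End PermFixMx.

Section PermFixMxOrder.
Variables (R : numFieldType) (d : nat) (g : 'cV[R]_d) (s : 'S_d) (z : 'I_d).
Hypotheses (g_ge0 : forall i, 0 <= g i 0) (gz_gt0 : 0 < g z 0).

Lemma perm_fixmx_ge0 :
  (forall i, s i != z -> g (s i) 0 <= g i 0) -> forall i j, 0 <= perm_fixmx g s z i j.
Proof.
move=> g_mono i j; rewrite mxE.
have [->|_] := eqVneq j z; last by rewrite mul0r addr0 ler0n.
rewrite mul1r; have [siz|/g_mono gsi] := eqVneq (s i) z.
  by rewrite siz -(divff (lt0r_neq0 gz_gt0)) -mulrDl addrC subrK divr_ge0 ?(ltW gz_gt0).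
by rewrite mulr0n add0r divr_ge0 ?subr_ge0 ?(ltW gz_gt0).
Qed.

Lemma perm_fixmx_center_gt0 i :
  s i != z -> g (s i) 0 < g i 0 -> 0 < perm_fixmx g s z i z.
Proof.
by move=> /negbTE siz gsi; rewrite mxE siz eqxx add0r mul1r divr_gt0 ?subr_gt0.
Qed.

End PermFixMxOrder.

Section PlainDrawings.
Variables (R : realType) (d : nat) (T : 'M[R]_d) (lam mu : 'S_d).
Hypothesis plainT : plain_drawing T lam mu.

Lemma plain_noncrossing j i j' i' : edge T j i -> edge T j' i' ->
  ((lam^-1)%g j < (lam^-1)%g j')%N -> ((mu^-1)%g i <= (mu^-1)%g i')%N.
Proof.
move=> e e' lt_jj'; rewrite leqNgt; apply/negP => lt_i'i; apply: plainT.
by exists ((lam^-1)%g j), ((lam^-1)%g j'), ((mu^-1)%g i), ((mu^-1)%g i'); rewrite !permKV.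
Qed.

Lemma plain_leaves_opposite c p1 p2 r1 r2 :
  p1 != c -> p2 != c -> r1 != r2 ->
  edge T c r1 -> edge T c r2 -> edge T p1 r1 -> edge T p2 r2 ->
  ((lam^-1)%g p1 < (lam^-1)%g c)%N != ((lam^-1)%g p2 < (lam^-1)%g c)%N.
Proof.
move=> p1c p2c r12 cr1 cr2 pr1 pr2; apply/negP => /eqP same_side.
have pos_neq p : p != c -> nat_of_ord ((lam^-1)%g p) != (lam^-1)%g c.
  by move=> pc; rewrite (inj_eq val_inj) (inj_eq perm_inj).
suff : nat_of_ord ((mu^-1)%g r1) = (mu^-1)%g r2.
  by move/val_inj/perm_inj/eqP; rewrite (negbTE r12).
apply/anti_leq/andP.
case: (ltngtP ((lam^-1)%g p1) ((lam^-1)%g c)) same_side => [lt1|gt1|/eqP];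
  last by rewrite (negbTE (pos_neq _ p1c)).
- move/esym=> lt2; split; first exact: plain_noncrossing pr1 cr2 lt1.
  exact: plain_noncrossing pr2 cr1 lt2.
- move/esym/negbT; rewrite -leqNgt leq_eqVlt eq_sym (negbTE (pos_neq _ p2c)) /= => gt2.
  split; first exact: plain_noncrossing cr1 pr2 gt2.
  exact: plain_noncrossing cr2 pr1 gt1.
Qed.

Lemma plain_no_spider c (leaf : 'I_d -> 'I_d) (rs : seq 'I_d) :
  uniq rs -> (2 < size rs)%N ->
  {in rs, forall r, [/\ leaf r != c, edge T c r & edge T (leaf r) r]} -> False.
Proof.
move=> rs_uniq rs_size legs.
pose side r := ((lam^-1)%g (leaf r) < (lam^-1)%g c)%N.
have side_inj : {in rs &, injective side}.
  move=> r1 r2 /legs[p1c cr1 pr1] /legs[p2c cr2 pr2]; apply: contra_eq => r12.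
  exact: plain_leaves_opposite p1c p2c r12 cr1 cr2 pr1 pr2.
have sides_uniq : uniq (map side rs) by rewrite map_inj_in_uniq.
have := max_card [pred b in map side rs].
by rewrite (card_uniqP sides_uniq) card_bool size_map leqNgt rs_size.
Qed.

End PlainDrawings.

Lemma extreme_point_of_support (R : realType) d (S : 'M[R]_d -> Prop) (T : 'M[R]_d) :
  S T -> (forall A, S A -> forall i j, 0 <= A i j) ->
  (forall A, S A -> (forall i j, T i j = 0 -> A i j = 0) -> A = T) ->
  extreme_point S T.
Proof.
move=> ST S_ge0 S_supp; split=> // A B t SA SB t_gt0 t_lt1 defT.
have supp i j : T i j = 0 -> A i j = 0 /\ B i j = 0.
  have t_ge0 : 0 <= t by exact: ltW.
  have t'_ge0 : 0 <= 1 - t by rewrite subr_ge0 ltW.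
  rewrite defT !mxE => /eqP.
  rewrite (paddr_eq0 (mulr_ge0 t_ge0 (S_ge0 _ SA i j)) (mulr_ge0 t'_ge0 (S_ge0 _ SB i j))).
  by rewrite !mulf_eq0 (gt_eqF t_gt0) subr_eq0 (gt_eqF t_lt1) => /andP[/eqP -> /eqP ->].
suff [-> ->] : A = T /\ B = T by [].
by split; apply: S_supp => // i j /supp[].
Qed.

(* [TP beta E i0] unfolds to [stoch_fixing (gibbs beta E i0)]. *)
Definition stoch_fixing (R : realType) d (g : 'cV[R]_d) (T : 'M[R]_d) : Prop :=
  (forall i j, 0 <= T i j) /\ (forall j, \sum_i T i j = 1) /\ T *m g = g.

Definition pred_cycle4 d (w x y z : 'I_d) : 'S_d := (tperm x w * tperm y x * tperm z y)%g.

Section PredCycle4.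
Variables (d : nat) (w x y z : 'I_d).
Hypothesis wxyz : uniq [:: w; x; y; z].
Local Notation s := (pred_cycle4 w x y z).

Lemma pred_cycle4E : [/\ s x = w, s y = x, s z = y & s w = z].
Proof.
move: wxyz; rewrite /= !inE !negb_or => /and4P[/and3P[wx wy wz] /andP[xy xz] yz _].
have nsym (a b : 'I_d) : a != b -> (b == a) = false by rewrite eq_sym => /negbTE.
have neqs := (negbTE wx, negbTE wy, negbTE wz, negbTE xy, negbTE xz, negbTE yz,
              nsym _ _ wx, nsym _ _ wy, nsym _ _ wz, nsym _ _ xy, nsym _ _ xz, nsym _ _ yz).
by split; rewrite /pred_cycle4 !permM !permE /=; do ![rewrite eqxx /= | rewrite neqs /=].
Qed.

Lemma pred_cycle4_out k : k \notin [:: w; x; y; z] -> s k = k.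
Proof.
rewrite !inE !negb_or => /and4P[kw kx ky kz].
by rewrite /pred_cycle4 !permM !tpermD // eq_sym.
Qed.

Lemma pred_cycle4_le disp (X : porderType disp) (f : 'I_d -> X) :
  (f w <= f x)%O -> (f x <= f y)%O -> (f y <= f z)%O -> forall i, s i != z -> (f (s i) <= f i)%O.
Proof.
move=> le_wx le_xy le_yz i; have [sx sy sz sw] := pred_cycle4E.
have [/pred_cycle4_out -> //|] := boolP (i \notin [:: w; x; y; z]).
by rewrite negbK !inE => /or4P[]/eqP->; rewrite ?sx ?sy ?sz ?sw ?eqxx.
Qed.

End PredCycle4.

Theorem stoch_fixing_extreme_not_plain (R : realType) d (g : 'cV[R]_d) (w x y z : 'I_d) :
  (forall i, 0 < g i 0) -> g w 0 < g x 0 -> g x 0 < g y 0 -> g y 0 < g z 0 ->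
  exists T, extreme_point (stoch_fixing g) T /\ forall lam mu, ~ plain_drawing T lam mu.
Proof.
move=> g_gt0 lt_wx lt_xy lt_yz.
have wxyz : uniq [:: w; x; y; z].
  apply: (@sorted_uniq _ (fun a b => g a 0 < g b 0)) => [a b c|a|] /=.
  - exact: lt_trans.
  - exact: ltxx.
  - by rewrite lt_wx lt_xy lt_yz.
have [sx sy sz _] := pred_cycle4E wxyz.
set s := pred_cycle4 w x y z in sx sy sz *.
have gz_neq0 : g z 0 != 0 by rewrite gt_eqF.
have T_stoch : stoch_fixing g (perm_fixmx g s z).
  split; last by split; [exact: perm_fixmx_sum_col | exact: perm_fixmx_fix].
  apply: perm_fixmx_ge0 => [i|//|]; first exact/ltW.
  by apply: pred_cycle4_le => //; apply: ltW.
exists (perm_fixmx g s z); split.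
  apply: extreme_point_of_support T_stoch _ _ => [A [] //|A [_ [sumA Ag]]].
  exact: perm_fixmx_unique.
move=> lam mu plainT; apply: (plain_no_spider plainT (c := z) (leaf := s) (rs := [:: x; y; z])).
- by case/andP: wxyz.
- by [].
move: wxyz; rewrite /= !inE !negb_or => /and4P[/and3P[_ _ wz] /andP[_ xz] yz _].
move=> r r_in; have [srz lt_sr] : s r != z /\ g (s r) 0 < g r 0.
  by move: r_in; rewrite !inE => /or3P[]/eqP->; rewrite ?sx ?sy ?sz.
split=> //; first exact: perm_fixmx_center_gt0.
by rewrite /edge perm_fixmx_leaf.
Qed.

Lemma injective_increasing4 disp (X : orderType disp) n (f : 'I_n -> X) :
  (4 <= n)%N -> injective f ->
  exists w x y z, [/\ (f w < f x)%O, (f x < f y)%O & (f y < f z)%O].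
Proof.
move=> n_ge4 f_inj.
pose s := sort <=%O [seq f i | i <- enum 'I_n].
have s_lt : sorted <%O s by rewrite sort_lt_sorted map_inj_uniq ?enum_uniq.
have s_size : (4 <= size s)%N by rewrite size_sort size_map size_enum_ord.
have s_im v : v \in s -> exists i, v = f i by rewrite mem_sort => /mapP[i _ ->]; exists i.
clearbody s; case: s s_lt s_size s_im => [|a [|b [|c [|e t]]]] //= /and4P[ab bc ce _] _ s_im.
have [w Ew] := s_im a (mem_head _ _).
have [x Ex] : exists x, b = f x by apply: s_im; rewrite !inE eqxx !orbT.
have [y Ey] : exists y, c = f y by apply: s_im; rewrite !inE eqxx !orbT.
have [z Ez] : exists z, e = f z by apply: s_im; rewrite !inE eqxx !orbT.
by exists w, x, y, z; rewrite -Ew -Ex -Ey -Ez.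
Qed.

Lemma Zpart_gt0 (R : realType) d (beta : R) (E : 'I_d -> R) i0 : 0 < Zpart beta E i0.
Proof.
rewrite /Zpart (bigD1 i0) //=; apply: ltr_wpDr; last exact: expR_gt0.
by apply: sumr_ge0 => k _; exact/ltW/expR_gt0.
Qed.

Lemma gibbs_gt0 (R : realType) d (beta : R) (E : 'I_d -> R) i0 i : 0 < gibbs beta E i0 i 0.
Proof. by rewrite mxE divr_gt0 ?expR_gt0 ?Zpart_gt0. Qed.

Lemma gibbs_inj (R : realType) d (beta : R) (E : 'I_d -> R) i0 :
  0 < beta -> injective E -> injective (fun i => gibbs beta E i0 i 0).
Proof.
have Z_neq0 := lt0r_neq0 (Zpart_gt0 beta E i0).
move=> beta_gt0 E_inj i j; rewrite !mxE => /(mulIf (invr_neq0 Z_neq0)).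
rewrite /qf => /expR_inj/oppr_inj/(mulfI (lt0r_neq0 beta_gt0))/addIr.
exact: E_inj.
Qed.

Theorem mainTheorem11 (R : realType) (d : nat) (beta : R) (E : 'I_d -> R) (i0 : 'I_d) :
  (4 <= d)%N -> 0 < beta -> nat_of_ord i0 = 0%N -> E i0 = 0 -> injective E ->
  exists T : 'M[R]_d, extreme_point (TP beta E i0) T /\ ~ biplanar beta E i0 T.
Proof.
move=> d_ge4 beta_gt0 _ _ E_inj.
have g_inj := gibbs_inj (i0 := i0) beta_gt0 E_inj.
have [w [x [y [z [lt_wx lt_xy lt_yz]]]]] := injective_increasing4 d_ge4 g_inj.
have [T [T_extreme T_not_plain]] :=
  stoch_fixing_extreme_not_plain (@gibbs_gt0 _ _ beta E i0) lt_wx lt_xy lt_yz.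
by exists T; split=> // -[_ [lam [mu]]]; apply: T_not_plain.
Qed.
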